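(* In the deterministic 4-user relay network described in the context (uplink gains $n_{tR}\geq n_{uR}\geq n_{vR}\geq n_{wR}$, downlink gains $n_{Ra}\geq n_{Rb}\geq n_{Rc}\geq n_{Rd}$, $\{t,u,v,w\}=\{a,b,c,d\}=\{1,2,3,4\}$), let $n^*=\min(n_{tR},n_{Ra})$ and, for distinct $p,q,r$, $\Phi(p,q,r)=\max\{R_{pq}+R_{pr}+\max(R_{qr},R_{rq}),\ R_{qp}+R_{qr}+\max(R_{pr},R_{rp}),\ R_{rp}+R_{rq}+\max(R_{pq},R_{qp})\}$ and $\Psi(p,q,r)=\max\{R_{qp}+R_{rp}+\max(R_{qr},R_{rq}),\ R_{pq}+R_{rq}+\max(R_{pr},R_{rp}),\ R_{pr}+R_{qr}+\max(R_{pq},R_{qp})\}$. Then the Simple Ordering Scheme (SOS) achieves every nonnegative integer rate tuple $(R_{ij})_{i\neq j\in\{1,2,3,4\}}$ that satisfies all of the inequalities $R_{wt}+R_{wu}+R_{wv}\leq n_{wR}$; $R_{ad}+R_{bd}+R_{cd}\leq n_{Rd}$; $R_{wt}+R_{wu}+R_{vt}+R_{vu}+\max(R_{vw},R_{wv})\leq n_{vR}$; $R_{ad}+R_{bd}+R_{ac}+R_{bc}+\max(R_{cd},R_{dc})\leq n_{Rc}$; $R_{ut}+R_{vt}+R_{wt}+\Phi(u,v,w)\leq n_{uR}$; $R_{tu}+R_{tv}+R_{tw}+\Phi(u,v,w)\leq n_{tR}$; $R_{ut}+R_{uv}+R_{uw}+\Phi(t,v,w)\leq n_{tR}$; $R_{vt}+R_{vu}+R_{vw}+\Phi(t,u,w)\leq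 n_{tR}$; $R_{wt}+R_{wu}+R_{wv}+\Phi(t,u,v)\leq n_{tR}$; $R_{ab}+R_{ac}+R_{ad}+\Psi(b,c,d)\leq n_{Rb}$; $R_{ba}+R_{ca}+R_{da}+\Psi(b,c,d)\leq n_{Ra}$; $R_{ab}+R_{cb}+R_{db}+\Psi(a,c,d)\leq n_{Ra}$; $R_{ac}+R_{bc}+R_{dc}+\Psi(a,b,d)\leq n_{Ra}$; $R_{ad}+R_{bd}+R_{cd}+\Psi(a,b,c)\leq n_{Ra}$, and in addition the extra conditions (E1) $\max\{R_{wu}+R_{uv}+R_{vw},\ R_{uw}+R_{wv}+R_{vu}\}+R_{wt}+R_{ut}+R_{vt}\leq n_{uR}$; (E2) $\max\{R_{bc}+R_{cd}+R_{db},\ R_{cb}+R_{bd}+R_{dc}\}+R_{ab}+R_{ac}+R_{ad}\leq n_{Rb}$; (E3) $R_{ij}+R_{jk}+R_{ki}+\max\{R_{li}+R_{lj}+R_{lk},\ R_{il}+R_{jl}+R_{kl}\}\leq n^*$ for every ordering $(i,j,k,l)$ of $\{1,2,3,4\}$; (E4) $R_{ij}+R_{jk}+R_{kl}+R_{li}+\max(R_{jl},R_{lj})+\max(R_{ik},R_{ki})\leq n^*$ for every ordering $(i,j,k,l)$ of $\{1,2,3,4\}$.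
   Context: Network: four users $1,2,3,4$ and a relay with no messages of its own; users have no direct links and communicate only through the relay. User $i$ sends to user $j$ at rate $R_{ij}$ bits per channel use. Linear deterministic model (Avestimehr–Diggavi–Tse) with non-reciprocal nonnegative integer gains: $n_{iR}$ from user $i$ to the relay, $n_{Ri}$ from the relay to user $i$; with $S$ the $q\times q$ down-shift matrix over $\mathbb{F}_2$, the relay receives $\sum_i S^{q-n_{iR}}x_i$ over $\mathbb{F}_2$ (so user $i$ reaches only the top $n_{iR}$ received levels) and user $i$ receives $S^{q-n_{Ri}}x_R$ (only the top $n_{Ri}$ relay levels). Simple Ordering Scheme (SOS): in the uplink, each user sends its message bits uncoded on distinct signal levels, ordered so that for each pair of users $i,j$, $\min(R_{ij},R_{ji})$ bits of the message $i\to j$ and the same number of bits of the message $j\to i$ arrive at the relay on the same received levels (so the relay observes their XORs), all other bits arriving on levels not shared with other bits. The relay does not decode individual bits; it reorders the received equations (XORed pairs or single bits) into four segments and broadcasts them: the segment for user $d$ (lowest downlink levels) consists of, for each $k\in\{a,b,c\}$, $\min(R_{dk},R_{kd})$ XORs of bits of $R_{dk}$ and $R_{kd}$, followed by the remaining $\max(R_{dk},R_{kd})-\min(R_{dk},R_{kd})$ single bits of $R_{kd}$ if $R_{kd}>R_{dk}$; the segments for $c$, $b$, $a$ (in increasing level order) are built in the same way from the bits not already included in lower segments. Each user decodes its intended bits from the levels it receives, using its own transmitted bits to strip XORs. The uplink levels are organized analogously into segments for users $w,v,u,t$. ''Achieves'' means that all messages are correctly decoded at rates $R_{ij}$. *)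

From mathcomp Require Import all_boot.
Set Implicit Arguments. Unset Strict Implicit. Unset Printing Implicit Defensive.

(* Users 1,2,3,4 are represented by the ordinals 0,1,2,3 of 'I_4. *)
Definition user := 'I_4.

(* Rates: R i j = R_{ij} (bits per channel use from user i to user j);
   the diagonal R i i is never used. *)
Definition rates := user -> user -> nat.

(* A message bit: (source, destination, index k) -- the k-th bit of the
   message source -> destination, with k < R source destination. *)
Definition bit := (user * user * nat)%type.
Definition src (x : bit) : user := x.1.1.
Definition dst (x : bit) : user := x.1.2.

(* For each unordered pair {i,j} (encoded
   with i < j) and each m < max(R_ij, R_ji) there is one equation:
   - if m < min(R_ij,R_ji): the XOR of bit m of i->j and bit m of j->i;
   - otherwise: the single bit m of the longer of the two messages. *)
Definition eqn := (user * user * nat)%type.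

Definition valid_eqn (R : rates) (e : eqn) : bool :=
  let: (i, j, m) := e in (i < j)%N && (m < maxn (R i j) (R j i))%N.

Definition is_xor (R : rates) (e : eqn) : bool :=
  let: (i, j, m) := e in (m < minn (R i j) (R j i))%N.

Definition eqn_bits (R : rates) (e : eqn) : seq bit :=
  let: (i, j, m) := e in
  if (m < minn (R i j) (R j i))%N then [:: (i, j, m); (j, i, m)]
  else if (R j i < R i j)%N then [:: (i, j, m)] else [:: (j, i, m)].

Definition num_eqns (R : rates) : nat :=
  \sum_(i < 4) \sum_(j < 4 | (i < j)%N) maxn (R i j) (R j i).

(* Segment owners.  [sup] is the list of uplink segments from the top relay
   level downwards, i.e. [:: w; v; u; t]; [sdn] is the list of downlink
   segments from the top (most significant) relay level downwards, i.e.
   [:: d; c; b; a].  An XOR of the pair {i,j} belongs to the segment of the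
   weaker of i and j (earlier in the list); a single bit belongs, in the
   uplink, to the segment of its source and, in the downlink, to the segment
   of its destination. *)
Definition owner_up (sup : seq user) (R : rates) (e : eqn) : user :=
  let: (i, j, m) := e in
  if (m < minn (R i j) (R j i))%N then
    (if (index i sup < index j sup)%N then i else j)
  else if (R j i < R i j)%N then i else j.

Definition owner_dn (sdn : seq user) (R : rates) (e : eqn) : user :=
  let: (i, j, m) := e in
  if (m < minn (R i j) (R j i))%N then
    (if (index i sdn < index j sdn)%N then i else j)
  else if (R j i < R i j)%N then j else i.

(* An SOS arrangement: [up e] is the relay level (0 = top) on which the
   relay receives equation e in the uplink, [dn e] the relay level
   (0 = top) on which the relay broadcasts it.  Both are bijections of the
   equations onto the levels 0 .. num_eqns-1 (the relay just reorders the
   received equations), and the equations are grouped into consecutive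
   segments in the order given by [sup] (uplink), resp. [sdn] (downlink).
   The order of equations inside a segment is left free. *)
Definition SOS_arrangement (sup sdn : seq user) (R : rates)
    (up dn : eqn -> nat) : Prop :=
  [/\ forall e, valid_eqn R e -> (up e < num_eqns R)%N,
      forall e e', valid_eqn R e -> valid_eqn R e' -> up e = up e' -> e = e'
    & forall e e', valid_eqn R e -> valid_eqn R e' ->
        (index (owner_up sup R e) sup < index (owner_up sup R e') sup)%N ->
        (up e < up e')%N] /\
  [/\ forall e, valid_eqn R e -> (dn e < num_eqns R)%N,
      forall e e', valid_eqn R e -> valid_eqn R e' -> dn e = dn e' -> e = e'
    & forall e e', valid_eqn R e -> valid_eqn R e' ->
        (index (owner_dn sdn R e) sdn < index (owner_dn sdn R e') sdn)%N ->
        (dn e < dn e')%N].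

(* Success of an arrangement with uplink gains nup (n_{iR} = nup i) and
   downlink gains ndn (n_{Ri} = ndn i):
   - uplink: user i reaches only the top n_{iR} relay levels, so every bit
     of user i must be placed on a relay level < n_{iR};
   - downlink: user j receives the top n_{Rj} relay levels; it decodes bit
     (i,j,k) if some received equation consists of that bit, possibly XORed
     with bits of user j's own messages (which j strips off). *)
Definition SOS_decodes (nup ndn : user -> nat) (R : rates)
    (up dn : eqn -> nat) : Prop :=
  (forall e, valid_eqn R e -> forall x, x \in eqn_bits R e ->
      (up e < nup (src x))%N) /\
  (forall i j : user, i != j -> forall k, (k < R i j)%N ->
     exists e, [/\ valid_eqn R e, (i, j, k) \in eqn_bits R e,
                   (dn e < ndn j)%N
                 & forall x, x \in eqn_bits R e -> x = (i, j, k) \/ src x = j]).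

Definition SOS_achieves (sup sdn : seq user) (nup ndn : user -> nat)
    (R : rates) : Prop :=
  (exists up dn, SOS_arrangement sup sdn R up dn) /\
  (forall up dn, SOS_arrangement sup sdn R up dn ->
     SOS_decodes nup ndn R up dn).

Definition Phi (R : rates) (p q r : user) : nat :=
  maxn (R p q + R p r + maxn (R q r) (R r q))
   (maxn (R q p + R q r + maxn (R p r) (R r p))
         (R r p + R r q + maxn (R p q) (R q p))).

Definition Psi (R : rates) (p q r : user) : nat :=
  maxn (R q p + R r p + maxn (R q r) (R r q))
   (maxn (R p q + R r q + maxn (R p r) (R r p))
         (R p r + R q r + maxn (R p q) (R q p))).

From Pilot Require Import Defs.
From mathcomp Require Import all_boot zify.
Set Implicit Arguments. Unset Strict Implicit. Unset Printing Implicit Defensive.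

(* In an SOS arrangement the segments occupy consecutive blocks
   of relay levels, so an equation of the k-th segment lies strictly below the
   number of equations in the first k segments.  Every bit of user i sits in
   an uplink segment no later than i's, and every bit for user j is carried
   by an equation in a downlink segment no later than j's.  Hence all
   messages are decoded as soon as, for every k, the equations of the first
   k segments fit under the gain of the owner of the k-th segment; the
   downlink is the uplink of the transposed rates.  Counted pair by pair,
   these loads are sums of rates and of terms maxn (R x y) (R y x).  For the
   last two segments, such a sum of maxima is the largest total rate along a
   tournament (an orientation of every pair); a tournament on three users is
   transitive (Phi) or a 3-cycle (E1, E2), and one on four users has either
   a source above a transitive (Phi) or cyclic (E3) triangle, or a sink below
   a 3-cycle (E3), or scores (1,1,2,2), i.e. a Hamiltonian 4-cycle plus its
   two chords (E4). *)

Definition user0 : user := @Ordinal 4 0 isT.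
Definition user1 : user := @Ordinal 4 1 isT.
Definition user2 : user := @Ordinal 4 2 isT.
Definition user3 : user := @Ordinal 4 3 isT.

Lemma userP (i : user) : [\/ i = user0, i = user1, i = user2 | i = user3].
Proof.
by case: i => [[|[|[|[|//]]]] lt_i4]; [constructor 1|constructor 2|constructor 3|constructor 4];
  apply/val_inj.
Qed.

Lemma mem_users (s : seq user) : uniq s -> size s = 4 -> forall z, z \in s.
Proof.
move=> uniq_s size_s z; apply: contraT => s'z.
have := cardC (mem s); rewrite card_ord (card_uniqP uniq_s) size_s (cardD1 z) inE s'z.
by rewrite addnS.
Qed.

Definition user_pairs : seq (user * user) :=
  [:: (user0, user1); (user0, user2); (user0, user3);
      (user1, user2); (user1, user3); (user2, user3)].

Definition pair_eqns (R : rates) (p : user * user) : seq Defs.eqn :=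
  [seq (p.1, p.2, m) | m <- iota 0 (maxn (R p.1 p.2) (R p.2 p.1))].

Definition eqns (R : rates) : seq Defs.eqn := flatten (map (pair_eqns R) user_pairs).

Lemma mem_eqns R e : (e \in eqns R) = valid_eqn R e.
Proof.
case: e => [[i j] m]; apply/flatten_mapP/idP => [[p p_pair /mapP[m' + [-> -> ->]]]|].
  rewrite mem_iota add0n /valid_eqn => /andP[_ ->]; rewrite andbT.
  by move: p_pair; rewrite !inE => /or3P[|/eqP->|/or4P[]] // /eqP->.
rewrite /valid_eqn => /andP[lt_ij lt_m]; exists (i, j).
  by case: (userP i) lt_ij => ->; case: (userP j) => ->.
by apply/mapP; exists m; rewrite // mem_iota.
Qed.

Lemma uniq_eqns R : uniq (eqns R).
Proof.
rewrite /eqns; have: uniq user_pairs by [].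
elim: user_pairs => //= p ps IH /andP[p_ps uniq_ps].
rewrite cat_uniq IH // andbT map_inj_uniq ?iota_uniq; last by move=> m m' [].
apply/hasPn => _ /flatten_mapP[q q_ps /mapP[m _ ->]].
apply/mapP => -[m' _ [eq1 eq2 _]]; move: p_ps q_ps.
by case: p q eq1 eq2 => [? ?] [? ?] /= -> -> /negP.
Qed.

Lemma size_eqns R : size (eqns R) = num_eqns R.
Proof.
have sum4 (F : 'I_4 -> nat) : \sum_(i < 4) F i = F user0 + F user1 + F user2 + F user3.
  by rewrite !big_ord_recl big_ord0 addn0 !addnA; congr (_ + _ + _ + _); congr F; apply/val_inj.
rewrite size_flatten /shape /= !size_map !size_iota /num_eqns sum4.
do 4! rewrite big_mkcond sum4 /=.
lia.
Qed.

Definition ranking (T : eqType) (s : seq T) (key pos : T -> nat) : Prop :=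
  [/\ {in s, forall x, pos x < size s}, {in s &, injective pos}
    & {in s &, forall x y, key x < key y -> pos x < pos y}].

(* The positions [pos] of the elements above [k] are distinct and exceed
   [pos x]; there are at most [size s - (pos x).+1] of them. *)
Lemma ranking_lt_count (T : eqType) (s : seq T) (key pos : T -> nat) k x :
  uniq s -> ranking s key pos -> x \in s -> key x <= k ->
  pos x < count (fun y => key y <= k) s.
Proof.
move=> uniq_s [pos_lt pos_inj pos_mono] s_x le_xk.
set above := [seq y <- s | k < key y].
have: size (map pos above) <= size (iota (pos x).+1 (size s - (pos x).+1)).
  apply: uniq_leq_size.
    rewrite map_inj_in_uniq ?filter_uniq // => y z.
    by rewrite !mem_filter => /andP[_ s_y] /andP[_ s_z]; apply: pos_inj.
  move=> i /mapP[y]; rewrite mem_filter => /andP[lt_ky s_y] ->.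
  have := pos_mono _ _ s_x s_y (leq_ltn_trans le_xk lt_ky).
  by rewrite mem_iota; have := pos_lt _ s_y; lia.
rewrite size_map size_iota size_filter.
have := count_predC (fun y => key y <= k) s.
rewrite (@eq_count _ (predC _) (fun y => k < key y)) => [|y]; last by rewrite /= -ltnNge.
by have := pos_lt _ s_x; lia.
Qed.

Lemma ranking_index_sort (T : eqType) (s : seq T) (key : T -> nat) :
  ranking s key (fun x => index x (sort (fun x y => key x <= key y) s)).
Proof.
set leK := fun x y => key x <= key y; set ss := sort leK s.
have sorted_ss : sorted leK ss by apply: sort_sorted => ? ?; apply: leq_total.
have leK_tr : transitive leK by move=> ? ? ?; apply: leq_trans.
split=> [x s_x | x y s_x s_y | x y s_x s_y lt_xy].
- by rewrite -(size_sort leK) index_mem mem_sort.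
- by move=> /= /(index_inj x); apply; rewrite mem_sort.
- rewrite /= ltnNge leq_eqVlt negb_or; apply/andP; split.
    apply: contraTneq lt_xy => /(index_inj x) eq_yx.
    by rewrite eq_yx ?ltnn ?mem_sort.
  apply: contraTN lt_xy => /(sorted_ltn_index leK_tr sorted_ss).
  by rewrite -leqNgt; apply; rewrite mem_sort.
Qed.

Lemma ranking_eqnsP R (key pos : Defs.eqn -> nat) :
  ranking (eqns R) key pos <->
  [/\ forall e, valid_eqn R e -> pos e < num_eqns R,
      forall e e', valid_eqn R e -> valid_eqn R e' -> pos e = pos e' -> e = e'
    & forall e e', valid_eqn R e -> valid_eqn R e' -> key e < key e' -> pos e < pos e'].
Proof.
rewrite /ranking size_eqns.
split=> -[pos_lt pos_inj pos_mono]; split=> [e|e e'|e e'].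
- by rewrite -mem_eqns; apply: pos_lt.
- by rewrite -!mem_eqns; apply: pos_inj.
- by rewrite -!mem_eqns; apply: pos_mono.
- by rewrite mem_eqns; apply: pos_lt.
- by rewrite !mem_eqns; apply: pos_inj.
- by rewrite !mem_eqns; apply: pos_mono.
Qed.

Lemma SOS_arrangementP sup sdn R up dn :
  SOS_arrangement sup sdn R up dn <->
  ranking (eqns R) (fun e => index (owner_up sup R e) sup) up /\
  ranking (eqns R) (fun e => index (owner_dn sdn R e) sdn) dn.
Proof. by split=> -[A B]; split; apply/ranking_eqnsP. Qed.

Lemma owner_up_index_le s R e x : x \in eqn_bits R e ->
  index (owner_up s R e) s <= index (src x) s.
Proof.
case: e => [[i j] m]; rewrite /owner_up /eqn_bits.
case: ifP => _; last by case: ifP => _; rewrite inE => /eqP->.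
by rewrite !inE => /orP[]/eqP->; rewrite /src /=; case: ltnP; lia.
Qed.

Definition carrier (i j : user) (k : nat) : Defs.eqn :=
  if (i < j)%N then (i, j, k) else (j, i, k).

Lemma carrierP s R (i j : user) k : i != j -> k < R i j ->
  [/\ valid_eqn R (carrier i j k), (i, j, k) \in eqn_bits R (carrier i j k),
      forall x, x \in eqn_bits R (carrier i j k) -> x = (i, j, k) \/ src x = j
    & index (owner_dn s R (carrier i j k)) s <= index j s].
Proof.
move=> ne_ij lt_k; rewrite /carrier /valid_eqn /eqn_bits /owner_dn.
case: ltngtP => [lt_ij|lt_ji|/val_inj eq_ij]; last by rewrite eq_ij eqxx in ne_ij.
- split; first by lia.
  + by case: ifP => xor; rewrite ?inE ?eqxx //; case: ifP; rewrite ?inE ?eqxx //; lia.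
  + move=> x; case: ifP => _; rewrite ?inE; first by case/orP => /eqP->; [left|right].
    by case: ifP => _; rewrite inE => /eqP->; [left|right].
  + by case: ifP => xor; [case: ltnP => /=; lia|case: ifP => //; lia].
- split; first by lia.
  + by case: ifP => xor; rewrite ?inE ?eqxx ?orbT //; case: ifP; rewrite ?inE ?eqxx //; lia.
  + move=> x; case: ifP => _; rewrite ?inE; first by case/orP => /eqP->; [right|left].
    by case: ifP => _; rewrite inE => /eqP->; [right|left].
  + by case: ifP => xor; [case: ltnP => /=; lia|case: ifP => //; lia].
Qed.

Definition segment_load (owner : seq user -> rates -> Defs.eqn -> user)
    (s : seq user) (R : rates) (z : user) : nat :=
  count (fun e => index (owner s R e) s <= index z s) (eqns R).

Lemma uplink_decodes s nup R up :
  ranking (eqns R) (fun e => index (owner_up s R e) s) up ->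
  (forall z, segment_load owner_up s R z <= nup z) ->
  forall e, valid_eqn R e -> forall x, x \in eqn_bits R e -> up e < nup (src x).
Proof.
move=> rank_up capacity e valid_e x bits_x.
apply: leq_trans (capacity (src x)).
apply: ranking_lt_count rank_up _ _; rewrite ?uniq_eqns ?mem_eqns //.
exact: owner_up_index_le.
Qed.

Lemma downlink_decodes s ndn R dn :
  ranking (eqns R) (fun e => index (owner_dn s R e) s) dn ->
  (forall z, segment_load owner_dn s R z <= ndn z) ->
  forall i j : user, i != j -> forall k, k < R i j ->
  exists e, [/\ valid_eqn R e, (i, j, k) \in eqn_bits R e, dn e < ndn j
              & forall x, x \in eqn_bits R e -> x = (i, j, k) \/ src x = j].
Proof.
move=> rank_dn capacity i j ne_ij k lt_k.
have [valid_e bits_e only_e owner_e] := carrierP s ne_ij lt_k.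
exists (carrier i j k); split=> //.
apply: leq_trans (capacity j).
by apply: ranking_lt_count rank_dn _ _; rewrite ?uniq_eqns ?mem_eqns.
Qed.

(* Number of equations of the pair {x, y} in the segments 0 .. p of the
   uplink order s: the min(R x y, R y x) XORs belong to the earlier of x and y,
   the excess bits of the longer message to its source. *)
Definition pair_load (s : seq user) (R : rates) (p : nat) (x y : user) : nat :=
  (minn (index x s) (index y s) <= p) * minn (R x y) (R y x)
  + (index x s <= p) * (R x y - R y x) + (index y s <= p) * (R y x - R x y).

Lemma pair_loadC s R p x y : pair_load s R p x y = pair_load s R p y x.
Proof. by rewrite /pair_load minnC (minnC (R x y)); lia. Qed.

Lemma count_pair_eqns s R p x y :
  count (fun e => index (owner_up s R e) s <= p) (pair_eqns R (x, y)) = pair_load s R p x y.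
Proof.
have count_const (b : bool) (ms : seq nat) : count (fun=> b) ms = b * size ms.
  by case: b; rewrite ?count_predT ?count_pred0 ?mul1n.
have le_min_max : minn (R x y) (R y x) <= maxn (R x y) (R y x) by rewrite geq_min leq_maxl.
rewrite count_map /owner_up /= -(subnKC le_min_max) iotaD count_cat.
rewrite [count _ (iota 0 _)](@eq_in_count _ _ (fun=> minn (index x s) (index y s) <= p));
  last by move=> m; rewrite mem_iota /= => ->; case: ltnP => //; lia.
rewrite [count _ (iota _ _)](@eq_in_count _ _ (fun=> index (if R y x < R x y then x else y) s <= p));
  last by move=> m; rewrite mem_iota add0n => /andP[+ _]; rewrite /= leqNgt => /negbTE->.
rewrite !count_const !size_iota /pair_load.
by case: ltnP; lia.
Qed.

Lemma pair_load_ordered s R p x y : index x s < index y s ->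
  pair_load s R p x y =
  if index y s <= p then maxn (R x y) (R y x) else if index x s <= p then R x y else 0.
Proof.
move=> lt_xy; rewrite /pair_load (minn_idPl (ltnW lt_xy)).
by case: (leqP (index y s) p) => le_y; case: (leqP (index x s) p) => le_x /=; lia.
Qed.

Lemma count_owner_up s R p :
  count (fun e => index (owner_up s R e) s <= p) (eqns R) =
  \sum_(q <- user_pairs) pair_load s R p q.1 q.2.
Proof. by rewrite /eqns /user_pairs /= !count_cat !count_pair_eqns !big_cons big_nil. Qed.

Lemma sum_user_pairs (h : user -> user -> nat) (s0 s1 s2 s3 : user) :
  (forall x y, h x y = h y x) -> uniq [:: s0; s1; s2; s3] ->
  \sum_(q <- user_pairs) h q.1 q.2 =
  h s0 s1 + h s0 s2 + h s0 s3 + h s1 s2 + h s1 s3 + h s2 s3.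
Proof.
move=> hC; rewrite /user_pairs !big_cons big_nil /=.
by case: (userP s0) => ->; case: (userP s1) => ->; case: (userP s2) => ->;
  case: (userP s3) => -> //= _;
  rewrite ?(hC user1 user0) ?(hC user2 user0) ?(hC user3 user0)
          ?(hC user2 user1) ?(hC user3 user1) ?(hC user3 user2); lia.
Qed.

Lemma uplink_loads (s0 s1 s2 s3 : user) R : uniq [:: s0; s1; s2; s3] ->
  let load := segment_load owner_up [:: s0; s1; s2; s3] R in
  [/\ load s0 = R s0 s1 + R s0 s2 + R s0 s3,
      load s1 = maxn (R s0 s1) (R s1 s0) + R s0 s2 + R s0 s3 + R s1 s2 + R s1 s3,
      load s2 = maxn (R s0 s1) (R s1 s0) + maxn (R s0 s2) (R s2 s0)
                + maxn (R s1 s2) (R s2 s1) + R s0 s3 + R s1 s3 + R s2 s3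
    & load s3 = maxn (R s0 s1) (R s1 s0) + maxn (R s0 s2) (R s2 s0)
                + maxn (R s0 s3) (R s3 s0) + maxn (R s1 s2) (R s2 s1)
                + maxn (R s1 s3) (R s3 s1) + maxn (R s2 s3) (R s3 s2)].
Proof.
move=> uniq_s load; set s := [:: s0; s1; s2; s3].
have index_s i : i < 4 -> index (nth s0 s i) s = i by move=> lt_i4; rewrite index_uniq.
have i0 : index s0 s = 0 := index_s 0 isT.
have i1 : index s1 s = 1 := index_s 1 isT.
have i2 : index s2 s = 2 := index_s 2 isT.
have i3 : index s3 s = 3 := index_s 3 isT.
rewrite /load /segment_load !count_owner_up !(sum_user_pairs (pair_loadC _ _ _) uniq_s).
rewrite !pair_load_ordered ?i0 ?i1 ?i2 ?i3 //=.
by split; lia.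
Qed.

(* The downlink owner of an equation is its uplink owner for the reversed
   messages, so the downlink is handled as the uplink of [transpose_rates R]. *)
Definition transpose_rates (R : rates) : rates := fun i j => R j i.

Lemma eqns_transpose R : eqns (transpose_rates R) = eqns R.
Proof. by rewrite /eqns; congr flatten; apply: eq_map => -[i j]; rewrite /pair_eqns /= maxnC. Qed.

Lemma segment_load_transpose s R z :
  segment_load owner_dn s R z = segment_load owner_up s (transpose_rates R) z.
Proof.
rewrite /segment_load eqns_transpose; apply: eq_in_count => -[[i j] m].
rewrite mem_eqns /valid_eqn /owner_dn /owner_up /transpose_rates => /andP[_ lt_m] /=.
by rewrite (minnC (R j i)); case: ltnP => // le_m; case: ltngtP => //; lia.
Qed.

Lemma Phi_transpose R p q r : Phi (transpose_rates R) p q r = Psi R p q r.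
Proof. by rewrite /Phi /Psi /transpose_rates (maxnC (R r q)) (maxnC (R r p)) (maxnC (R q p)). Qed.

Definition cycle3_bound (R : rates) (n : nat) : Prop :=
  forall i j k l : user, uniq [:: i; j; k; l] ->
    R i j + R j k + R k i + maxn (R l i + R l j + R l k) (R i l + R j l + R k l) <= n.

Definition cycle4_bound (R : rates) (n : nat) : Prop :=
  forall i j k l : user, uniq [:: i; j; k; l] ->
    R i j + R j k + R k l + R l i + maxn (R j l) (R l j) + maxn (R i k) (R k i) <= n.

Ltac perm4 := apply/permP => ?; rewrite /=; lia.

Lemma cycle3_bound_le R m n : m <= n -> cycle3_bound R m -> cycle3_bound R n.
Proof. by move=> le_mn bound i j k l /bound /leq_trans; apply. Qed.

Lemma cycle4_bound_le R m n : m <= n -> cycle4_bound R m -> cycle4_bound R n.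
Proof. by move=> le_mn bound i j k l /bound /leq_trans; apply. Qed.

Lemma cycle3_bound_transpose R n :
  cycle3_bound R n -> cycle3_bound (transpose_rates R) n.
Proof.
move=> bound i j k l uniq_ijkl.
have uniq_ikjl : uniq [:: i; k; j; l].
  by rewrite (perm_uniq (_ : perm_eq _ [:: i; j; k; l])) //; perm4.
by have := bound _ _ _ _ uniq_ikjl; rewrite /transpose_rates; lia.
Qed.

Lemma cycle4_bound_transpose R n :
  cycle4_bound R n -> cycle4_bound (transpose_rates R) n.
Proof.
move=> bound i j k l uniq_ijkl.
have uniq_ilkj : uniq [:: i; l; k; j].
  by rewrite (perm_uniq (_ : perm_eq _ [:: i; j; k; l])) //; perm4.
by have := bound _ _ _ _ uniq_ilkj; rewrite /transpose_rates; lia.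
Qed.

Ltac split_maxn_in H :=
  rewrite ?addn_maxl ?addn_maxr ?geq_max in H;
  repeat match type of H with is_true (_ && _) => case/andP: H => ? H end.

Ltac split_maxn_goal :=
  rewrite ?addn_maxl ?addn_maxr ?geq_max; repeat (apply/andP; split).

Lemma tournament3_le (Q : rates) (t u v w : user) n :
  Q u t + Q v t + Q w t + Phi Q u v w <= n ->
  maxn (Q w u + Q u v + Q v w) (Q u w + Q w v + Q v u) + Q w t + Q u t + Q v t <= n ->
  maxn (Q w v) (Q v w) + maxn (Q w u) (Q u w) + maxn (Q v u) (Q u v)
    + Q w t + Q v t + Q u t <= n.
Proof.
rewrite /Phi => transitive cyclic.
split_maxn_in transitive; split_maxn_in cyclic; split_maxn_goal; lia.
Qed.

Lemma tournament4_le (Q : rates) (p q r s : user) n :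
  uniq [:: p; q; r; s] ->
  Q p q + Q p r + Q p s + Phi Q q r s <= n ->
  Q q p + Q q r + Q q s + Phi Q p r s <= n ->
  Q r p + Q r q + Q r s + Phi Q p q s <= n ->
  Q s p + Q s q + Q s r + Phi Q p q r <= n ->
  cycle3_bound Q n -> cycle4_bound Q n ->
  maxn (Q s r) (Q r s) + maxn (Q s q) (Q q s) + maxn (Q s p) (Q p s)
    + maxn (Q r q) (Q q r) + maxn (Q r p) (Q p r) + maxn (Q q p) (Q p q) <= n.
Proof.
move=> U src_p src_q src_r src_s cyc3 cyc4.
have uniq_of i j k l : perm_eq [:: i; j; k; l] [:: p; q; r; s] -> uniq [:: i; j; k; l].
  by move/perm_uniq->.
have c1 := cyc3 p q r s U.
have c2 := cyc3 p r q s (uniq_of p r q s ltac:(perm4)).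
have c3 := cyc3 p q s r (uniq_of p q s r ltac:(perm4)).
have c4 := cyc3 p s q r (uniq_of p s q r ltac:(perm4)).
have c5 := cyc3 p r s q (uniq_of p r s q ltac:(perm4)).
have c6 := cyc3 p s r q (uniq_of p s r q ltac:(perm4)).
have c7 := cyc3 q r s p (uniq_of q r s p ltac:(perm4)).
have c8 := cyc3 q s r p (uniq_of q s r p ltac:(perm4)).
have h1 := cyc4 p q r s U.
have h2 := cyc4 p q s r (uniq_of p q s r ltac:(perm4)).
have h3 := cyc4 p r q s (uniq_of p r q s ltac:(perm4)).
have h4 := cyc4 p r s q (uniq_of p r s q ltac:(perm4)).
have h5 := cyc4 p s q r (uniq_of p s q r ltac:(perm4)).
have h6 := cyc4 p s r q (uniq_of p s r q ltac:(perm4)).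
clear cyc3 cyc4 U; rewrite /Phi in src_p src_q src_r src_s.
split_maxn_in src_p; split_maxn_in src_q; split_maxn_in src_r; split_maxn_in src_s.
split_maxn_in c1; split_maxn_in c2; split_maxn_in c3; split_maxn_in c4.
split_maxn_in c5; split_maxn_in c6; split_maxn_in c7; split_maxn_in c8.
split_maxn_in h1; split_maxn_in h2; split_maxn_in h3; split_maxn_in h4.
split_maxn_in h5; split_maxn_in h6.
split_maxn_goal; lia.
Qed.

Lemma SOS_arrangement_exists sup sdn R : exists up dn, SOS_arrangement sup sdn R up dn.
Proof. by do 2 eexists; apply/SOS_arrangementP; split; apply: ranking_index_sort. Qed.

Unset Implicit Arguments.

Theorem lemma1 (t u v w a b c d : user) (nup ndn : user -> nat) (R : rates) :
  uniq [:: t; u; v; w] -> uniq [:: a; b; c; d] ->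
  (nup w <= nup v)%N -> (nup v <= nup u)%N -> (nup u <= nup t)%N ->
  (ndn d <= ndn c)%N -> (ndn c <= ndn b)%N -> (ndn b <= ndn a)%N ->
  let nstar := minn (nup t) (ndn a) in
  (R w t + R w u + R w v <= nup w)%N ->
  (R a d + R b d + R c d <= ndn d)%N ->
  (R w t + R w u + R v t + R v u + maxn (R v w) (R w v) <= nup v)%N ->
  (R a d + R b d + R a c + R b c + maxn (R c d) (R d c) <= ndn c)%N ->
  (R u t + R v t + R w t + Phi R u v w <= nup u)%N ->
  (R t u + R t v + R t w + Phi R u v w <= nup t)%N ->
  (R u t + R u v + R u w + Phi R t v w <= nup t)%N ->
  (R v t + R v u + R v w + Phi R t u w <= nup t)%N ->
  (R w t + R w u + R w v + Phi R t u v <= nup t)%N ->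
  (R a b + R a c + R a d + Psi R b c d <= ndn b)%N ->
  (R b a + R c a + R d a + Psi R b c d <= ndn a)%N ->
  (R a b + R c b + R d b + Psi R a c d <= ndn a)%N ->
  (R a c + R b c + R d c + Psi R a b d <= ndn a)%N ->
  (R a d + R b d + R c d + Psi R a b c <= ndn a)%N ->
  (* (E1) *)
  (maxn (R w u + R u v + R v w) (R u w + R w v + R v u)
     + R w t + R u t + R v t <= nup u)%N ->
  (* (E2) *)
  (maxn (R b c + R c d + R d b) (R c b + R b d + R d c)
     + R a b + R a c + R a d <= ndn b)%N ->
  (* (E3) *)
  (forall i j k l : user, uniq [:: i; j; k; l] ->
     (R i j + R j k + R k i
        + maxn (R l i + R l j + R l k) (R i l + R j l + R k l) <= nstar)%N) ->
  (* (E4) *)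
  (forall i j k l : user, uniq [:: i; j; k; l] ->
     (R i j + R j k + R k l + R l i
        + maxn (R j l) (R l j) + maxn (R i k) (R k i) <= nstar)%N) ->
  SOS_achieves [:: w; v; u; t] [:: d; c; b; a] nup ndn R.
Proof.
move=> uniq_tuvw uniq_abcd _ _ _ _ _ _ nstar up_w dn_d up_v dn_c up_u up_t1 up_t2 up_t3 up_t4
  dn_b dn_a1 dn_a2 dn_a3 dn_a4 E1 E2 E3 E4.
have uniq_up : uniq [:: w; v; u; t] by rewrite -rev_uniq; exact: uniq_tuvw.
have uniq_dn : uniq [:: d; c; b; a] by rewrite -rev_uniq; exact: uniq_abcd.
split=> [|up dn /SOS_arrangementP[rank_up rank_dn]]; first exact: SOS_arrangement_exists.
split.
- apply: (uplink_decodes rank_up) => z.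
  have [load_w load_v load_u load_t] := uplink_loads R uniq_up.
  move: (mem_users uniq_up erefl z); rewrite !inE => /or4P[]/eqP->.
  + by rewrite load_w; move: up_w; lia.
  + by rewrite load_v; move: up_v; lia.
  + by rewrite load_u; exact: tournament3_le up_u E1.
  + by rewrite load_t; apply: tournament4_le uniq_tuvw up_t1 up_t2 up_t3 up_t4 _ _;
      [apply: cycle3_bound_le E3|apply: cycle4_bound_le E4]; apply: geq_minl.
- apply: (downlink_decodes rank_dn) => z; rewrite segment_load_transpose.
  have [load_d load_c load_b load_a] := uplink_loads (transpose_rates R) uniq_dn.
  move: (mem_users uniq_dn erefl z); rewrite !inE => /or4P[]/eqP->.
  + by rewrite load_d /transpose_rates; move: dn_d; lia.
  + by rewrite load_c /transpose_rates; move: dn_c; lia.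
  + by rewrite load_b; apply: tournament3_le; rewrite ?Phi_transpose /transpose_rates; lia.
  + rewrite load_a; apply: tournament4_le uniq_abcd _ _ _ _ _ _; rewrite ?Phi_transpose //.
    * by apply/cycle3_bound_transpose/(cycle3_bound_le _ E3)/geq_minr.
    * by apply/cycle4_bound_transpose/(cycle4_bound_le _ E4)/geq_minr.
Qed.
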